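(* Assume (A1)–(A3) and (A6). Let $\Omega_n\in\mathcal O'$ ($n\in\mathbb N$) and let $\Omega\subseteq D$ be open with $\overline{\Gamma_0}\subseteq\partial\Omega$ and $\partial\Omega\setminus(Q_1\cup Q_2)=\Gamma_0$, such that $\partial\Omega_n\to\partial\Omega$ in the Hausdorff metric on compact sets. If the compact sets $\Gamma_1^n:=\partial\Omega_n\cap Q_1$ converge in the Hausdorff metric to a compact set $L$, then $L=\partial\Omega\cap Q_1$.
   Context: (A1) $D\subset\mathbb R^d$, $d\ge2$, open bounded. (A2) $V>0$, $\varepsilon>0$ fixed. (A3) $M\subset\overline D$ is a compact $(d-1)$-dimensional Lipschitz manifold with boundary, $\Gamma_0:=M\setminus\partial M$, with finitely many connected components having pairwise disjoint closures. (A6) $Q_1,Q_2\subseteq\overline D$ are disjoint compact sets with $\overline{\Gamma_0}\setminus(Q_1\cup Q_2)=\Gamma_0$. For $y,\xi\in\mathbb R^d$, $|\xi|=1$, $C(y,\xi,\varepsilon)=\{z:(z-y)\cdot\xi\ge|z-y|\cos\varepsilon,\ 0<|z-y|<\varepsilon\}$; an open $\Omega$ has the $\varepsilon$-cone property if for every $x\in\partial\Omega$ there is a unit $\xi_x$ with $C(y,\xi_x,\varepsilon)\subset\Omega$ for all $y\in\overline\Omega\cap B(x,\varepsilon)$. $\mathcal O'$ is the set of open connected $\Omega\subseteq D$ with the $\varepsilon$-cone property, $|\Omega|=V$, $\Gamma_0\subset\partial\Omega$ and $\partial\Omega\setminus(Q_1\cup Q_2)=\Gamma_0$ (for such $\Omega$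 one has $\overline{\Gamma_0}\subseteq\partial\Omega$). *)

From HB Require Import structures.
From mathcomp Require Import all_boot all_order all_algebra.
From mathcomp Require Import all_classical all_reals all_analysis.
Set Implicit Arguments. Unset Strict Implicit. Unset Printing Implicit Defensive.
Import Order.TTheory GRing.Theory Num.Theory.
Import numFieldNormedType.Exports.
Local Open Scope classical_set_scope.
Local Open Scope ring_scope.

Section Defs.
Variable R : realType.

Definition edot (n : nat) (x y : 'rV[R]_n) : R := \sum_(i < n) x ord0 i * y ord0 i.
Definition enorm (n : nat) (x : 'rV[R]_n) : R := Num.sqrt (edot x x).
Definition eball (n : nat) (x : 'rV[R]_n) (r : R) : set 'rV[R]_n :=
  [set y | enorm (y - x) < r].

Definition bdry (n : nat) (A : set 'rV[R]_n) : set 'rV[R]_n :=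
  closure A `\` interior A.

Definition ebounded (n : nat) (A : set 'rV[R]_n) : Prop :=
  exists r : R, A `<=` eball 0 r.

(* Lebesgue measure of an open set, computed as its inner content by
   half-open dyadic cubes: |Om| = sup_k 2^(-k n) * #{dyadic cubes of side 2^-k inside Om} *)
Definition dyadic_cube (n : nat) (k : nat) (j : 'rV[int]_n) : set 'rV[R]_n :=
  [set x | forall i : 'I_n,
     (j ord0 i)%:~R / 2 ^+ k <= x ord0 i /\ x ord0 i < ((j ord0 i) + 1)%:~R / 2 ^+ k].

Definition dyadic_inner_sums (n : nat) (Om : set 'rV[R]_n) : set R :=
  [set v | exists (k : nat) (s : seq 'rV[int]_n), uniq s /\
      (forall j, j \in s -> dyadic_cube k j `<=` Om) /\
      v = (size s)%:R / 2 ^+ (k * n)].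

Definition open_volume_eq (n : nat) (Om : set 'rV[R]_n) (V : R) : Prop :=
  ubound (dyadic_inner_sums Om) V /\
  forall e : R, 0 < e -> exists2 v, dyadic_inner_sums Om v & V - e < v.

Definition cone (n : nat) (y xi : 'rV[R]_n) (eps : R) : set 'rV[R]_n :=
  [set z | enorm (z - y) * cos eps <= edot (z - y) xi /\
           0 < enorm (z - y) /\ enorm (z - y) < eps].

Definition cone_property (n : nat) (eps : R) (Om : set 'rV[R]_n) : Prop :=
  forall x, bdry Om x -> exists xi : 'rV[R]_n, enorm xi = 1 /\
    forall y, closure Om y -> eball x eps y -> cone y xi eps `<=` Om.

Definition lipschitz_on (m n : nat) (f : 'rV[R]_m -> 'rV[R]_n) (A : set 'rV[R]_m) :=
  exists L : R, forall a b, A a -> A b -> enorm (f a - f b) <= L * enorm (a - b).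

Definition halfspace (k : nat) : set 'rV[R]_k :=
  [set u | forall i : 'I_k, nat_of_ord i = 0%N -> 0 <= u ord0 i].
Definition halfspace_bd (k : nat) : set 'rV[R]_k :=
  [set u | exists i : 'I_k, nat_of_ord i = 0%N /\ u ord0 i = 0].

Definition lip_chart (d : nat) (M : set 'rV[R]_d) (p : 'rV[R]_d)
  (phi : 'rV[R]_d -> 'rV[R]_d.-1) : Prop :=
  exists (U : set 'rV[R]_d) (W' : set 'rV[R]_d.-1) (psi : 'rV[R]_d.-1 -> 'rV[R]_d),
    open U /\ U p /\ open W' /\
    let W := W' `&` @halfspace d.-1 in
    (forall x, M x -> U x -> W (phi x) /\ psi (phi x) = x) /\
    (forall w, W w -> (M (psi w) /\ U (psi w)) /\ phi (psi w) = w) /\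
    lipschitz_on phi (M `&` U) /\ lipschitz_on psi W.

Definition lip_manifold_wb (d : nat) (M : set 'rV[R]_d) : Prop :=
  compact M /\ forall p, M p -> exists phi, lip_chart M p phi.

Definition mbdry (d : nat) (M : set 'rV[R]_d) : set 'rV[R]_d :=
  [set p | M p /\ exists phi, lip_chart M p phi /\ @halfspace_bd d.-1 (phi p)].

Definition fin_components_disj_closures (d : nat) (G : set 'rV[R]_d) : Prop :=
  finite_set (connected_component G @` G) /\
  forall x y, G x -> G y -> connected_component G x != connected_component G y ->
    closure (connected_component G x) `&` closure (connected_component G y) = set0.

Definition admissible (d : nat) (D : set 'rV[R]_d) (V eps : R)
  (Gamma0 Q1 Q2 : set 'rV[R]_d) (Om : set 'rV[R]_d) : Prop :=
  open Om /\ connected Om /\ Om `<=` D /\ cone_property eps Om /\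
  open_volume_eq Om V /\ Gamma0 `<=` bdry Om /\
  bdry Om `\` (Q1 `|` Q2) = Gamma0.

(* Hausdorff convergence of sets (metric convergence for nonempty compacts) *)
Definition enbhd (n : nat) (S : set 'rV[R]_n) (e : R) : set 'rV[R]_n :=
  [set x | exists2 y, S y & enorm (x - y) < e].

Definition hausdorff_cvg (n : nat) (A : nat -> set 'rV[R]_n) (B : set 'rV[R]_n) : Prop :=
  forall e : R, 0 < e -> exists N : nat, forall m : nat, (N <= m)%N ->
    A m `<=` enbhd B e /\ B `<=` enbhd (A m) e.

End Defs.

(* The inclusion of L in ∂Ω ∩ Q1 holds because Hausdorff limits of subsets lie in
   the closed limit set and in any closed set containing them.  Conversely, let
   x ∈ ∂Ω ∩ Q1.  If x is in the closure of Γ0, then x lies on every ∂Ω_n (which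
   is closed and contains Γ0), hence in ∂Ω_n ∩ Q1 for all n, hence in L.
   Otherwise some ball around x misses both the closure of Γ0 and the closed set
   Q2 (disjoint from Q1); since ∂Ω_n ∖ (Q1 ∪ Q2) = Γ0, the points of ∂Ω_n in that
   ball belong to Q1, and they approximate x as n grows, so again x ∈ L. *)
From mathcomp Require Import all_boot all_order all_algebra.
From mathcomp Require Import all_classical all_reals all_analysis.
Import Order.TTheory GRing.Theory Num.Theory.
Import numFieldNormedType.Exports.
Local Open Scope classical_set_scope.
Local Open Scope ring_scope.

Set Implicit Arguments.
Unset Strict Implicit.

Section PseudoMetric.
Variables (R : realFieldType) (T : pseudoMetricType R).
Implicit Types (x : T) (A C : set T).

Lemma closure_ballP A x :
  (forall e : R, 0 < e -> exists y, A y /\ ball x e y) -> closure A x.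
Proof.
move=> Hball B /nbhs_ballP[r /= r0 sB]; have [y [Ay bxy]] := Hball r r0.
by exists y; split=> //; exact: sB.
Qed.

Lemma ball_notin_closed C x : closed C -> ~ C x ->
  exists2 r : R, 0 < r & forall y, ball x r y -> ~ C y.
Proof.
move=> clC nCx; have : nbhs x (~` C).
  by apply: open_nbhs_nbhs; split=> //; exact: closed_openC.
by move=> /nbhs_ballP[r /= r0 sC]; exists r.
Qed.

Lemma ball_setD_cover G Q1 Q2 x : closed Q2 -> ~ Q2 x -> ~ closure G x ->
  exists2 r : R, 0 < r & forall A, A `\` (Q1 `|` Q2) = G ->
    forall y, A y -> ball x r y -> Q1 y.
Proof.
move=> clQ2 nQ2x nGx.
have [r1 r1_gt0 hQ2] := ball_notin_closed clQ2 nQ2x.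
have [r2 r2_gt0 hG] := ball_notin_closed (@closed_closure _ G) nGx.
exists (Order.min r1 r2); first by rewrite lt_min r1_gt0 r2_gt0.
move=> A AG y Ay bxy; apply: contrapT => nQ1y.
have nQ2y : ~ Q2 y by apply: hQ2; apply: le_ball bxy; rewrite ge_min lexx.
apply: (hG y); first by apply: le_ball bxy; rewrite ge_min lexx orbT.
by apply: subset_closure; rewrite -AG; split=> // -[].
Qed.

End PseudoMetric.

Section HausdorffLimits.
Variables (R : realType) (n : nat).
Implicit Types (x y : 'rV[R]_n) (A B : set 'rV[R]_n)
  (F G : nat -> set 'rV[R]_n).

Lemma normr_le_enorm x : `|x| <= enorm x.
Proof.
have -> : `|x| = mx_norm x by [].
rewrite mx_normrE; apply: bigmax_le; first exact: sqrtr_ge0.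
move=> [i j] _ /=; rewrite (ord1 i) /enorm /edot.
rewrite -sqrtr_sqr ler_sqrt; last by apply: sumr_ge0 => k _; rewrite -expr2 sqr_ge0.
rewrite (bigD1 j) //= -expr2 lerDl.
by apply: sumr_ge0 => k _; rewrite -expr2 sqr_ge0.
Qed.

Lemma ball_enorm x y (e : R) : enorm (x - y) < e -> ball x e y.
Proof.
move=> lt_xy_e; rewrite mx_norm_ball /ball_ /=.
exact: le_lt_trans (normr_le_enorm _) lt_xy_e.
Qed.

Lemma closed_bdry A : closed (bdry A).
Proof.
by rewrite /bdry setDE; apply: closedI;
  [exact: closed_closure | apply: open_closedC; exact: open_interior].
Qed.

Lemma enorm0 : enorm (0 : 'rV[R]_n) = 0.
Proof. by rewrite /enorm /edot big1 ?sqrtr0 // => i _; rewrite mxE mul0r. Qed.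

Lemma hausdorff_cvg_cst A : hausdorff_cvg (fun=> A) A.
Proof.
by move=> e e_gt0; exists 0%N => m _; split=> x Ax; exists x; rewrite ?subrr ?enorm0.
Qed.

Lemma hausdorff_cvg_subset F G A B : (forall m, F m `<=` G m) ->
  hausdorff_cvg F A -> hausdorff_cvg G B -> closed B -> A `<=` B.
Proof.
move=> FG cvgF cvgG clB x Ax; rewrite (closure_id B).1 //.
apply: closure_ballP => e e_gt0; have e2_gt0 : 0 < e / 2 by rewrite divr_gt0.
have [N1 HF] := cvgF _ e2_gt0; have [N2 HG] := cvgG _ e2_gt0.
have [y Fy xy] := (HF (maxn N1 N2) (leq_maxl _ _)).2 x Ax.
have [z Bz yz] := (HG (maxn N1 N2) (leq_maxr _ _)).1 y (FG _ _ Fy).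
by exists z; split=> //; apply: (ball_split (z := y)); exact: ball_enorm.
Qed.

Lemma hausdorff_cvg_mem F A x : hausdorff_cvg F A -> closed A ->
  (exists N, forall m, (N <= m)%N -> F m x) -> A x.
Proof.
move=> cvgF clA [N FNx]; rewrite (closure_id A).1 //.
apply: closure_ballP => e e_gt0; have [N1 HF] := cvgF _ e_gt0.
have [y Ay xy] := (HF (maxn N N1) (leq_maxr _ _)).1 x (FNx _ (leq_maxl _ _)).
by exists y; split=> //; exact: ball_enorm.
Qed.

Lemma hausdorff_cvg_mem_local F G A B x r : 0 < r ->
  (forall m y, F m y -> ball x r y -> G m y) ->
  hausdorff_cvg F A -> hausdorff_cvg G B -> closed B -> A x -> B x.
Proof.
move=> r_gt0 FG cvgF cvgG clB Ax; rewrite (closure_id B).1 //.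
apply: closure_ballP => e e_gt0; have e2_gt0 : 0 < e / 2 by rewrite divr_gt0.
have er_gt0 : 0 < Order.min (e / 2) r by rewrite lt_min e2_gt0 r_gt0.
have [N1 HF] := cvgF _ er_gt0; have [N2 HG] := cvgG _ e2_gt0.
set m := maxn N1 N2.
have [y Fy /ball_enorm xy] := (HF m (leq_maxl _ _)).2 x Ax.
have Gy : G m y by apply: FG Fy (le_ball _ xy); rewrite ge_min lexx orbT.
have [z Bz yz] := (HG m (leq_maxr _ _)).1 y Gy.
exists z; split=> //; apply: (ball_split (z := y)); last exact: ball_enorm.
by apply: le_ball xy; rewrite ge_min lexx.
Qed.

End HausdorffLimits.

Unset Implicit Arguments.

Theorem mainTheorem6 (R : realType) (d : nat) (D : set 'rV[R]_d) (V eps : R)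
  (M Q1 Q2 : set 'rV[R]_d) (Om : nat -> set 'rV[R]_d) (Om0 : set 'rV[R]_d)
  (L : set 'rV[R]_d) :
  (* (A1) *)
  (2 <= d)%N -> open D -> ebounded D ->
  (* (A2) *)
  0 < V -> 0 < eps ->
  (* (A3) *)
  M `<=` closure D -> lip_manifold_wb M ->
  fin_components_disj_closures (M `\` mbdry M) ->
  (* (A6) *)
  Q1 `<=` closure D -> Q2 `<=` closure D -> compact Q1 -> compact Q2 ->
  Q1 `&` Q2 = set0 ->
  closure (M `\` mbdry M) `\` (Q1 `|` Q2) = M `\` mbdry M ->
  (* Om n in O' *)
  (forall n, admissible D V eps (M `\` mbdry M) Q1 Q2 (Om n)) ->
  (* the limit set Omega *)
  Om0 `<=` D -> open Om0 ->
  closure (M `\` mbdry M) `<=` bdry Om0 ->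
  bdry Om0 `\` (Q1 `|` Q2) = M `\` mbdry M ->
  hausdorff_cvg (fun n => bdry (Om n)) (bdry Om0) ->
  compact L ->
  hausdorff_cvg (fun n => bdry (Om n) `&` Q1) L ->
  L = bdry Om0 `&` Q1.
Proof.
move=> _ _ _ _ _ _ _ _ _ _ cQ1 cQ2 Q12 _ admOm _ _ _ _ cvgB cL cvgBQ1.
set G := M `\` mbdry M in admOm *.
have [clQ1 clQ2 clL] : [/\ closed Q1, closed Q2 & closed L].
  by split; apply: compact_closed (@norm_hausdorff R _) _.
have G_bdry n : G `<=` bdry (Om n) by have [_ [_ [_ [_ [_ []]]]]] := admOm n.
have bdry_cover n : bdry (Om n) `\` (Q1 `|` Q2) = G.
  by have [_ [_ [_ [_ [_ [_ ->]]]]]] := admOm n.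
apply/seteqP; split => x.
  move=> Lx; split.
    apply: (hausdorff_cvg_subset _ cvgBQ1 cvgB (closed_bdry (A := Om0)) Lx).
    by move=> m; exact: subIsetl.
  apply: (hausdorff_cvg_subset _ cvgBQ1 (hausdorff_cvg_cst Q1) clQ1 Lx).
  by move=> m; exact: subIsetr.
move=> [Bx Q1x]; have [Gx|nGx] := pselect (closure G x).
  apply: hausdorff_cvg_mem cvgBQ1 clL _; exists 0%N => m _.
  split=> //; rewrite (closure_id (bdry (Om m))).1; last exact: closed_bdry.
  exact: closureS (G_bdry m) _ Gx.
have nQ2x : ~ Q2 x by move=> Q2x; have : (Q1 `&` Q2) x by []; rewrite Q12.
have [r r_gt0 near_Q1] := ball_setD_cover Q1 clQ2 nQ2x nGx.
apply: (hausdorff_cvg_mem_local r_gt0 _ cvgB cvgBQ1 clL Bx).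
by move=> m y By bxy; split=> //; exact: near_Q1 (bdry_cover m) y By bxy.
Qed.
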